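(* Let $\mathcal B$ be a finite set of finite distributive double p-algebras and consider the corresponding set $\mathcal Y=\{H(\mathbf A^\flat)\mid \mathbf A\in\mathcal B\}$ of finite ordered sets. The following are equivalent: (1) the algebras in $\mathcal B$ are quasi-primal and share a common ternary discriminator term; (2) each $\mathbf A\in\mathcal B$ is simple; (3) each $\mathbf A\in\mathcal B$ is directly indecomposable and regular, that is, $\mathbf A$ satisfies $[a^*=b^*\ \&\ a^+=b^+]\Rightarrow a=b$; (4) each $\mathbb X\in\mathcal Y$ is connected and every element of $\mathbb X$ is either maximal or minimal.
   Context: A distributive double p-algebra is an algebra $\mathbf A=\langle A;\vee,\wedge,{}^*,{}^+,0,1\rangle$ such that $\mathbf A^\flat=\langle A;\vee,\wedge,0,1\rangle$ is a bounded distributive lattice and ${}^*,{}^+$ are unary operations with $x\wedge y=0\iff y\le x^*$ and $x\vee y=1\iff y\ge x^+$. For a finite bounded distributive lattice $\mathbf L$, $H(\mathbf L)$ is the ordered set of all bounded-lattice homomorphisms $\mathbf L\to\mathbf 2$ ordered pointwise (the Priestley dual of $\mathbf L$). The ternary discriminator on $A$ is $\tau(x,y,z)=x$ if $x\ne y$, $=z$ if $x=y$; a finite algebra is quasi-primal if $\tau$ is a term function; a family shares a common ternary discriminator term if one ternary term induces $\tau$ on every member. *)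

From mathcomp Require Import all_boot.
From Stdlib Require Import Relations.Relation_Operators.

Set Implicit Arguments.
Unset Strict Implicit.
Unset Printing Implicit Defensive.

(* A finite distributive double p-algebra
   <A; \/, /\, *, +, 0, 1>: the reduct <A; \/, /\, 0, 1> is a bounded
   distributive lattice (lattice order: y <= x iff y /\ x = y), and
   x /\ y = 0 <-> y <= x^*,   x \/ y = 1 <-> y >= x^+. *)
Record ddpa := DDPA {
  car :> finType;
  jn : car -> car -> car;
  mt : car -> car -> car;
  st : car -> car;
  pl : car -> car;
  bot : car;
  top : car;
  jnC : forall x y, jn x y = jn y x;
  jnA : forall x y z, jn x (jn y z) = jn (jn x y) z;
  mtC : forall x y, mt x y = mt y x;
  mtA : forall x y z, mt x (mt y z) = mt (mt x y) z;
  absJM : forall x y, jn x (mt x y) = x;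
  absMJ : forall x y, mt x (jn x y) = x;
  distr : forall x y z, mt x (jn y z) = jn (mt x y) (mt x z);
  botJ : forall x, jn bot x = x;
  topM : forall x, mt top x = x;
  stP : forall x y, mt x y = bot <-> mt y (st x) = y;
  plP : forall x y, jn x y = top <-> mt (pl x) y = pl x
}.

Inductive term (n : nat) : Type :=
  | TVar of 'I_n
  | TJn of term n & term n
  | TMt of term n & term n
  | TSt of term n
  | TPl of term n
  | TBot
  | TTop.

Fixpoint eval (A : ddpa) n (e : 'I_n -> A) (t : term n) : A :=
  match t with
  | TVar i => e i
  | TJn t1 t2 => jn (eval e t1) (eval e t2)
  | TMt t1 t2 => mt (eval e t1) (eval e t2)
  | TSt t1 => st (eval e t1)
  | TPl t1 => pl (eval e t1)
  | TBot => bot A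
  | TTop => top A
  end.

Definition discr (A : ddpa) (x y z : A) : A := if x == y then z else x.

Definition induces_discr (A : ddpa) (t : term 3) : Prop :=
  forall x y z : A, eval (fun i : 'I_3 => nth x [:: x; y; z] i) t = discr x y z.

Definition quasi_primal (A : ddpa) : Prop := exists t : term 3, induces_discr A t.

Definition nontrivial (A : ddpa) : Prop := exists x y : A, x <> y.

Definition congruence (A : ddpa) (th : rel A) : Prop :=
  [/\ (forall x, th x x), (forall x y, th x y -> th y x),
      (forall x y z, th x y -> th y z -> th x z),
      (forall x x' y y', th x x' -> th y y' ->
          th (jn x y) (jn x' y') /\ th (mt x y) (mt x' y')) &
      (forall x x', th x x' -> th (st x) (st x') /\ th (pl x) (pl x'))].

Definition simple (A : ddpa) : Prop :=
  nontrivial A /\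
  forall th : rel A, congruence th ->
    (forall x y, th x y -> x = y) \/ (forall x y, th x y).

Definition hom_prod (A B C : ddpa) (f : A -> B * C) : Prop :=
  [/\ (forall x y, f (jn x y) = (jn (f x).1 (f y).1, jn (f x).2 (f y).2)),
      (forall x y, f (mt x y) = (mt (f x).1 (f y).1, mt (f x).2 (f y).2)),
      (forall x, f (st x) = (st (f x).1, st (f x).2)),
      (forall x, f (pl x) = (pl (f x).1, pl (f x).2)) &
      f (bot A) = (bot B, bot C) /\
      f (top A) = (top B, top C)].

Definition dir_indec (A : ddpa) : Prop :=
  nontrivial A /\
  ~ (exists (B C : ddpa) (f : A -> B * C),
        [/\ bijective f, hom_prod f, nontrivial B & nontrivial C]).

Definition regular (A : ddpa) : Prop :=
  forall a b : A, st a = st b -> pl a = pl b -> a = b.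

(* H(A^flat): bounded-lattice homomorphisms A -> 2, ordered pointwise *)
Definition lat_hom_b (A : ddpa) (f : {ffun A -> bool}) : bool :=
  [&& [forall x, forall y, f (jn x y) == f x || f y],
      [forall x, forall y, f (mt x y) == f x && f y],
      f (bot A) == false & f (top A) == true].

Definition H (A : ddpa) := {f : {ffun A -> bool} | lat_hom_b f}.

Definition Hle (A : ddpa) (f g : H A) : Prop :=
  forall x : A, val f x -> val g x.

Definition Hmaximal (A : ddpa) (f : H A) : Prop :=
  forall g : H A, Hle f g -> g = f.
Definition Hminimal (A : ddpa) (f : H A) : Prop :=
  forall g : H A, Hle g f -> g = f.

Definition Hconnected (A : ddpa) : Prop :=
  inhabited (H A) /\
  forall f g : H A,
    clos_refl_trans (H A) (fun u v => Hle u v \/ Hle v u) f g.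

(* Everything is read off the Priestley dual H(A): an element is determined by the set of
   points where it holds, [st x] holds at a point iff [x] fails at every point above it, and
   dually [pl x] holds iff [x] fails at some point below it.  So [st] only sees maximal points
   and [pl] only minimal ones: regularity and simplicity both amount to every point being
   maximal or minimal, while complemented elements are the clopen up-and-down-sets, so direct
   indecomposability amounts to connectedness.  Conversely, on a connected ordered set of
   height at most one, equality of [x] and [y] is expressible at every point, and iterating
   [st (pl _)] spreads a failure along comparabilities until it covers all of H(A); after as
   many steps as there are points this gives a discriminator term common to all the algebras. *)

From mathcomp Require Import all_boot.
From mathcomp Require Import boolp.
From Stdlib Require Import Relations.Relation_Operators.

Set Implicit Arguments.
Unset Strict Implicit.
Unset Printing Implicit Defensive.

(* The lattice order [x <= y] is expressed as [mt x y = x] throughout. *)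
Section Lattice.
Variable A : ddpa.
Implicit Types x y z : A.

Lemma mtxx x : mt x x = x.
Proof. by rewrite -{2}(absJM x x) absMJ. Qed.

Lemma mt0x x : mt (bot A) x = bot A.
Proof. by rewrite -{1}(botJ x) absMJ. Qed.

Lemma mtx0 x : mt x (bot A) = bot A.
Proof. by rewrite mtC mt0x. Qed.

Lemma mtx1 x : mt x (top A) = x.
Proof. by rewrite mtC topM. Qed.

Lemma jnx0 x : jn x (bot A) = x.
Proof. by rewrite jnC botJ. Qed.

Lemma mt_idl x y : mt (mt x y) x = mt x y.
Proof. by rewrite mtC mtA mtxx. Qed.

Lemma le_trans x y z : mt x y = x -> mt y z = y -> mt x z = x.
Proof. by move=> xy yz; rewrite -xy -mtA yz. Qed.

Lemma le_anti x y : mt x y = x -> mt y x = y -> x = y.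
Proof. by move=> xy yx; rewrite -xy mtC yx. Qed.

Lemma le_jn x y z : mt x z = x -> mt y z = y -> mt (jn x y) z = jn x y.
Proof. by move=> xz yz; rewrite mtC distr mtC xz mtC yz. Qed.

Lemma le_mt x y z : (mt x (mt y z) == x) = (mt x y == x) && (mt x z == x).
Proof.
apply/eqP/andP => [xyz|[/eqP xy /eqP xz]]; last by rewrite mtA xy xz.
by split; apply/eqP; apply: le_trans xyz _; [exact: mt_idl | rewrite -mtA mtxx].
Qed.

Lemma mt_st x : mt x (st x) = bot A.
Proof. by apply/(stP x (st x)); rewrite mtxx. Qed.

Lemma jn_pl x : jn x (pl x) = top A.
Proof. by apply/(plP x (pl x)); rewrite mtxx. Qed.

Lemma mt_jn_disj x y z : mt x z = x -> mt y z = bot A -> mt (jn x y) z = x.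
Proof. by move=> xz yz; rewrite mtC distr !(mtC z) xz yz jnx0. Qed.

Lemma mt_le_st x y : mt x (st y) = x -> mt x y = bot A.
Proof. by move/(stP y x).2; rewrite mtC. Qed.

Lemma mt_st_le x y : mt x y = x -> mt x (st y) = bot A.
Proof. by move=> xy; rewrite -xy -mtA mt_st mtx0. Qed.

End Lattice.

Definition pt (A : ddpa) (f : H A) : A -> bool := val f.
Coercion pt : H >-> Funclass.

Section Points.
Variable A : ddpa.
Implicit Types (x y z : A) (f g h : H A).

Lemma pt_jn f x y : f (jn x y) = f x || f y.
Proof. by case/and4P: (valP f) => /forallP /(_ x) /forallP /(_ y) /eqP. Qed.

Lemma pt_mt f x y : f (mt x y) = f x && f y.
Proof. by case/and4P: (valP f) => _ /forallP /(_ x) /forallP /(_ y) /eqP. Qed.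

Lemma pt_bot f : f (bot A) = false.
Proof. by case/and4P: (valP f) => _ _ /eqP. Qed.

Lemma pt_top f : f (top A).
Proof. by case/and4P: (valP f) => _ _ _ /eqP. Qed.

Lemma join_prime_lat_hom (j : A) : j <> bot A ->
    (forall p q, mt j (jn p q) = j -> mt j p = j \/ mt j q = j) ->
  lat_hom_b [ffun z => mt j z == j].
Proof.
move=> j0 j_prime; apply/and4P; split.
- apply/forallP => p; apply/forallP => q; rewrite !ffunE; apply/eqP; apply/idP/idP.
    by move/eqP/j_prime => [] ->; rewrite eqxx ?orbT.
  by case/orP => /eqP jpq; apply/eqP; rewrite distr jpq ?absJM // jnC absJM.
- by apply/forallP => p; apply/forallP => q; rewrite !ffunE le_mt.
- by rewrite ffunE mtx0 eqbF_neg; apply/eqP => /esym.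
- by rewrite ffunE mtx1 !eqxx.
Qed.

(* Prime filter theorem: a minimal [j <= x] with [j </= y] is join-prime. *)
Lemma pt_sep x y : mt x y <> x -> exists f : H A, f x && ~~ f y.
Proof.
move=> nxy; pose below z := #|[pred w : A | mt w z == w]|.
pose S := [pred z : A | (mt z x == z) && (mt z y != z)].
have Sx : S x by rewrite /= mtxx eqxx; apply/eqP.
case: (arg_minnP below Sx) => j /andP [/eqP jx /eqP jy] j_min.
have below_j a : mt a j = a -> a <> j -> mt a y = a.
  move=> aj naj; apply/eqP; apply: contraT => nay.
  suff : below a < below j by rewrite ltnNge j_min //= (le_trans aj jx) eqxx.
  apply: proper_card; apply/andP; split.
    by apply/subsetP => w; rewrite !inE => /eqP wa; apply/eqP; apply: le_trans wa aj.
  apply/negP => /subsetP /(_ j); rewrite !inE mtxx eqxx => /(_ isT) /eqP ja.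
  by apply: naj; apply: le_anti.
have hom : lat_hom_b [ffun z => mt j z == j].
  apply: join_prime_lat_hom => [j0|p q jpq]; first by apply: jy; rewrite j0 mt0x.
  case: (eqVneq (mt j p) j) => [|/eqP jp]; first by left.
  case: (eqVneq (mt j q) j) => [|/eqP jq]; first by right.
  case: jy; rewrite -jpq distr.
  by apply: le_jn; apply: below_j; rewrite ?mt_idl.
by exists (Sub _ hom); rewrite /pt /= !ffunE jx eqxx; apply/eqP.
Qed.

Lemma exists_pt_neq x y : x <> y -> exists f : H A, f x != f y.
Proof.
move=> nxy; case: (eqVneq (mt x y) x) => [xy|/eqP/pt_sep [f /andP [fx fy]]].
  have [|f /andP [fy fx]] := @pt_sep y x; first by move=> yx; apply: nxy; apply: le_anti.
  by exists f; rewrite fy (negbTE fx).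
by exists f; rewrite fx (negbTE fy).
Qed.

Lemma pt_ext x y : (forall f : H A, f x = f y) -> x = y.
Proof.
move=> fxy; case: (eqVneq x y) => // /eqP/exists_pt_neq [f].
by rewrite fxy eqxx.
Qed.

Lemma exists_pt_neq0 x : x <> bot A -> exists f : H A, f x.
Proof. by move/exists_pt_neq => [f]; rewrite pt_bot eqbF_neg negbK; exists f. Qed.

Lemma exists_pt_neq1 x : x <> top A -> exists f : H A, ~~ f x.
Proof. by move/exists_pt_neq => [f]; rewrite pt_top eqb_id; exists f. Qed.

Lemma H_inhabited : nontrivial A -> inhabited (H A).
Proof. by case=> x [y /exists_pt_neq [f _]]; constructor. Qed.

Lemma pt_big_mt (I : finType) (P : pred I) (F : I -> A) f :
  f (\big[@mt A/top A]_(i | P i) F i) = [forall (i | P i), f (F i)].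
Proof. by rewrite (big_morph (pt f) (pt_mt f) (pt_top f)) big_andE. Qed.

Lemma pt_big_jn (I : finType) (P : pred I) (F : I -> A) f :
  f (\big[@jn A/bot A]_(i | P i) F i) = [exists (i | P i), f (F i)].
Proof. by rewrite (big_morph (pt f) (pt_jn f) (pt_bot f)) big_orE. Qed.

Definition Hleb f g := [forall z, f z ==> g z].

Lemma HleP f g : reflect (Hle f g) (Hleb f g).
Proof. by apply: (iffP forallP) => fg z; [apply/implyP: (fg z) | apply/implyP/fg]. Qed.

Lemma pt_Hleb f g x : Hleb f g -> f x -> g x.
Proof. by move/forallP/(_ x)/implyP. Qed.

Lemma Hleb_refl f : Hleb f f.
Proof. by apply/forallP => z; apply/implyP. Qed.

Lemma Hleb_trans f g h : Hleb f g -> Hleb g h -> Hleb f h.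
Proof. by move=> fg gh; apply/forallP => z; apply/implyP => /(pt_Hleb fg)/(pt_Hleb gh). Qed.

Lemma Hleb_anti f g : Hleb f g -> Hleb g f -> f = g.
Proof.
by move=> fg gf; apply/val_inj/ffunP => z; apply/idP/idP; apply: pt_Hleb.
Qed.

Definition filter_meet f := \big[@mt A/top A]_(z | f z) z.
Definition ideal_join f := \big[@jn A/bot A]_(z | ~~ f z) z.

Lemma pt_filter_meet g f : g (filter_meet f) = Hleb f g.
Proof. exact: pt_big_mt. Qed.

Lemma pt_ideal_join g f : g (ideal_join f) = ~~ Hleb g f.
Proof.
rewrite pt_big_jn negb_forall; apply: eq_existsb => z.
by rewrite negb_imply andbC.
Qed.

Lemma exists_elt_of_upset (U : pred (H A)) :
  (forall f g, Hleb f g -> U f -> U g) -> exists e : A, forall f, f e = U f.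
Proof.
move=> U_up; exists (\big[@jn A/bot A]_(g | U g) filter_meet g) => f.
rewrite pt_big_jn; apply/existsP/idP => [[g /andP [Ug]]|Uf].
  by rewrite pt_filter_meet => gf; apply: U_up gf Ug.
by exists f; rewrite Uf pt_filter_meet Hleb_refl.
Qed.

Lemma pt_st f x : f (st x) = [forall g : H A, Hleb f g ==> ~~ g x].
Proof.
apply/idP/forallP => [fs g|fs].
  apply/implyP => fg; apply/negP => gx.
  by have := pt_mt g x (st x); rewrite mt_st pt_bot gx (pt_Hleb fg fs).
apply: contraT => nfs; have [g] : exists g : H A, g (mt (filter_meet f) x).
  apply: exists_pt_neq0 => fm_x; case/negP: nfs.
  have le_st : mt (filter_meet f) (st x) = filter_meet f by apply/stP; rewrite mtC.
  by have := pt_filter_meet f f; rewrite Hleb_refl -le_st pt_mt => /andP [].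
by rewrite pt_mt pt_filter_meet => /andP [fg gx]; move: (implyP (fs g) fg); rewrite gx.
Qed.

Lemma pt_pl f x : f (pl x) = [exists g : H A, Hleb g f && ~~ g x].
Proof.
apply/idP/existsP => [fp|[g /andP [gf ngx]]]; last first.
  by apply: (pt_Hleb gf); have := pt_jn g x (pl x); rewrite jn_pl pt_top (negbTE ngx).
have [g] : exists g : H A, ~~ g (jn x (ideal_join f)).
  apply: exists_pt_neq1 => /(plP x) le_pl.
  by move: fp; rewrite -le_pl pt_mt pt_ideal_join Hleb_refl andbF.
by rewrite pt_jn negb_or pt_ideal_join negbK => /andP [ngx gf]; exists g; rewrite gf.
Qed.

Definition Hmaxb f := [forall g : H A, Hleb f g ==> (g == f)].
Definition Hminb f := [forall g : H A, Hleb g f ==> (g == f)].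
Definition extremal f := Hmaxb f || Hminb f.

Lemma HmaximalP f : reflect (Hmaximal f) (Hmaxb f).
Proof.
apply: (iffP forallP) => [fmax g /HleP fg|fmax g]; first exact/eqP/(implyP (fmax g)).
by apply/implyP => /HleP/fmax ->.
Qed.

Lemma HminimalP f : reflect (Hminimal f) (Hminb f).
Proof.
apply: (iffP forallP) => [fmin g /HleP gf|fmin g]; first exact/eqP/(implyP (fmin g)).
by apply/implyP => /HleP/fmin ->.
Qed.

Lemma extremalP f : reflect (Hmaximal f \/ Hminimal f) (extremal f).
Proof. by apply: (iffP orP) => -[/HmaximalP|/HminimalP]; [left|right|left|right]. Qed.

Lemma Hleb_card f g : Hleb f g -> #|pt g| <= #|pt f| -> f = g.
Proof.
move=> fg le_gf; have fg_sub : pt f \subset pt g by apply/subsetP => z; apply: pt_Hleb.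
have gf_sub : pt g \subset pt f.
  by rewrite -(subset_leqif_card fg_sub).2 eqn_leq le_gf subset_leq_card.
by apply: Hleb_anti fg _; apply/forallP => z; apply/implyP => /(subsetP gf_sub z).
Qed.

Lemma exists_Hmax f : exists2 m, Hleb f m & Hmaxb m.
Proof.
have [m fm m_max] := @arg_maxnP _ f (Hleb f) (fun g => #|pt g|) (Hleb_refl f).
exists m => //; apply/forallP => g; apply/implyP => mg.
by rewrite (Hleb_card mg (m_max g (Hleb_trans fm mg))).
Qed.

Lemma exists_Hmin f : exists2 m, Hleb m f & Hminb m.
Proof.
have [m mf m_min] := @arg_minnP _ f (Hleb^~ f) (fun g => #|pt g|) (Hleb_refl f).
exists m => //; apply/forallP => g; apply/implyP => gm.
by rewrite (Hleb_card gm (m_min g (Hleb_trans gm mf))).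
Qed.

Lemma pt_st_max f x : Hmaxb f -> f (st x) = ~~ f x.
Proof.
move=> fmax; rewrite pt_st; apply/forallP/idP => [fs|nfx g].
  exact: implyP (fs f) (Hleb_refl f).
by apply/implyP => fg; rewrite (eqP (implyP (forallP fmax g) fg)).
Qed.

Lemma pt_pl_min f x : Hminb f -> f (pl x) = ~~ f x.
Proof.
move=> fmin; rewrite pt_pl; apply/existsP/idP => [[g /andP [gf]]|nfx]; last first.
  by exists f; rewrite Hleb_refl.
by rewrite (eqP (implyP (forallP fmin g) gf)).
Qed.

Lemma pt_st_maxE f x : f (st x) = [forall m : H A, Hleb f m && Hmaxb m ==> ~~ m x].
Proof.
rewrite pt_st; apply/forallP/forallP => fs g; apply/implyP.
  by case/andP => fg _; apply: (implyP (fs g)).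
move=> fg; apply/negP => gx; have [m gm m_max] := exists_Hmax g.
by have := implyP (fs m); rewrite (Hleb_trans fg gm) m_max (pt_Hleb gm gx) => /(_ isT).
Qed.

Lemma pt_pl_minE f x : f (pl x) = [exists m : H A, [&& Hleb m f, Hminb m & ~~ m x]].
Proof.
rewrite pt_pl; apply/existsP/existsP => [[g /andP [gf ngx]]|[m /and3P [mf _ nmx]]].
  have [m mg m_min] := exists_Hmin g; exists m; rewrite (Hleb_trans mg gf) m_min /=.
  by apply: contra ngx; apply: pt_Hleb.
by exists m; rewrite mf.
Qed.

(* [a] realises the up-set of [f] and [b] the same set with [f] removed; as [f] is neither
   maximal nor minimal, [st] and [pl] cannot tell them apart. *)
Lemma twins_of_not_extremal f : ~~ extremal f ->
  exists a b : A,
    [/\ a <> b, st a = st b, pl a = pl b & forall k : H A, k != f -> k a = k b].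
Proof.
rewrite negb_or => /andP [/forallPn [g] + /forallPn [h]].
rewrite !negb_imply => /andP [fg gf] /andP [hf hf'].
have [a a_pts] : exists a : A, forall k : H A, k a = Hleb f k.
  by apply: exists_elt_of_upset => k l kl fk; apply: Hleb_trans fk kl.
have [b b_pts] : exists b : A, forall k : H A, k b = Hleb f k && (k != f).
  apply: exists_elt_of_upset => k l kl /andP [fk kf]; rewrite (Hleb_trans fk kl) /=.
  by apply: contraNneq kf => lf; apply/eqP; apply: Hleb_anti _ fk; rewrite -lf.
exists a, b; split.
- by move=> ab; move: (b_pts f); rewrite -ab a_pts Hleb_refl eqxx.
- apply: pt_ext => k; rewrite !pt_st; apply/forallP/forallP => st_k l; apply/implyP => kl.
    by rewrite b_pts negb_and -a_pts (implyP (st_k l) kl).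
  move: (implyP (st_k l) kl); rewrite b_pts a_pts negb_and negbK => /orP [//|/eqP lf].
  have kg : Hleb k g by rewrite (Hleb_trans kl) // lf.
  by move: (implyP (st_k g) kg); rewrite b_pts fg gf.
- apply: pt_ext => k; rewrite !pt_pl; apply/existsP/existsP => -[l /andP [lk nl]].
    by exists l; rewrite lk b_pts negb_and -a_pts nl.
  move: nl; rewrite b_pts negb_and negbK => /orP [nl|/eqP lf]; first by exists l; rewrite lk a_pts.
  exists h; rewrite (Hleb_trans hf) -?lf // a_pts /=.
  by apply: contra hf' => fh; apply/eqP/Hleb_anti.
- by move=> k kf; rewrite a_pts b_pts kf andbT.
Qed.

Lemma regular_extremal : regular A <-> forall f : H A, extremal f.
Proof.
split=> [reg f|ext a b sab pab].
  apply: contraT => /twins_of_not_extremal [a [b [ab sab pab _]]].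
  by case: ab; apply: reg.
apply: pt_ext => f; case/orP: (ext f) => [fmax|fmin]; apply: negb_inj.
  by rewrite -!pt_st_max // sab.
by rewrite -!pt_pl_min // pab.
Qed.

End Points.

Lemma eval_congr (A : ddpa) (th : rel A) n (e e' : 'I_n -> A) (t : term n) :
  congruence th -> (forall i, th (e i) (e' i)) -> th (eval e t) (eval e' t).
Proof.
case=> th_refl _ _ th_op th_un th_e; elim: t => //= [t1 IH1 t2 IH2|t1 IH1 t2 IH2|t1 IH1|t1 IH1].
- by case: (th_op _ _ _ _ IH1 IH2).
- by case: (th_op _ _ _ _ IH1 IH2).
- by case: (th_un _ _ IH1).
- by case: (th_un _ _ IH1).
Qed.

(* A congruence identifying [a <> b] identifies [discr a b c = a] with [discr a a c = c]. *)
Lemma quasi_primal_simple (A : ddpa) : quasi_primal A -> bot A <> top A -> simple A.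
Proof.
move=> [t t_discr] nt; split; first by exists (bot A), (top A).
move=> th th_congr; have [th_refl th_sym th_trans _ _] := th_congr.
have [|/existsNP [a /existsPNP [b th_ab nab]]] := pselect (forall x y, th x y -> x = y).
  by left.
right; suff th_a c : th a c by move=> x y; apply: (th_trans _ a); [apply: th_sym|].
have := @eval_congr A th 3 (fun i => nth a [:: a; b; c] i) (fun i => nth a [:: a; a; c] i) t.
rewrite !t_discr /discr eqxx (negbTE (introN eqP nab)); apply=> //.
by case=> [[|[|[|i]]] lt_i3] /=; [apply: th_refl | apply: th_sym | apply: th_refl..].
Qed.

Lemma simple_dir_indec (A : ddpa) : simple A -> dir_indec A.
Proof.
case=> nt A_simple; split=> // -[B [C [F [[G FG GF] [FJ FM FS FP _]]]]].
move=> [b1 [b2 nb]] [c1 [c2 nc]].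
pose th := [rel x y : A | (F x).1 == (F y).1].
have th_congr : congruence th.
  split=> [x|x y|x y z|x x' y y'|x x'] /=.
  - exact: eqxx.
  - by rewrite eq_sym.
  - by move=> /eqP-> /eqP->.
  - by move=> /eqP xx' /eqP yy'; rewrite FJ FM FJ FM /= xx' yy' !eqxx.
  - by move=> /eqP xx'; rewrite FS FP FS FP /= xx' !eqxx.
case: (A_simple th th_congr) => [th_id|th_all].
  have := th_id (G (b1, c1)) (G (b1, c2)); rewrite /th /= !GF eqxx => /(_ isT) e.
  by apply: nc; have := congr1 F e; rewrite !GF => -[].
by apply: nb; have /eqP := th_all (G (b1, c1)) (G (b2, c1)); rewrite !GF.
Qed.

(* Identifying elements that agree on all extremal points is a congruence, since [st] and
   [pl] only depend on the maximal, resp. minimal, points. *)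
Lemma simple_extremal (A : ddpa) : simple A -> forall f : H A, extremal f.
Proof.
case=> nt A_simple.
pose th := [rel x y : A | [forall f : H A, extremal f ==> (f x == f y)]].
have thE x y (f : H A) : th x y -> extremal f -> f x = f y.
  by move=> /forallP /(_ f) /implyP xy /xy /eqP.
have th_st x y (f : H A) : th x y -> f (st x) = f (st y).
  move=> xy; rewrite !pt_st_maxE; apply: eq_forallb => m.
  by case: (boolP (Hmaxb m)) => m_max; rewrite ?andbF // (thE x y m xy) /extremal ?m_max.
have th_pl x y (f : H A) : th x y -> f (pl x) = f (pl y).
  move=> xy; rewrite !pt_pl_minE; apply: eq_existsb => m.
  by case: (boolP (Hminb m)) => m_min; rewrite ?andbF // (thE x y m xy) /extremal ?m_min ?orbT.
have th_congr : congruence th.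
  split=> [x|x y xy|x y z xy yz|x x' y y' xx' yy'|x x' xx'];
    try split; apply/forallP => f; apply/implyP => ext_f.
  - exact: eqxx.
  - by rewrite (thE x y f xy).
  - by rewrite (thE x y f xy) // (thE y z f yz).
  - by rewrite !pt_jn (thE x x' f xx') // (thE y y' f yy').
  - by rewrite !pt_mt (thE x x' f xx') // (thE y y' f yy').
  - by rewrite (th_st x x' f xx').
  - by rewrite (th_pl x x' f xx').
case: (A_simple th th_congr) => [th_id f|th_all].
  apply: contraT => not_ext; have [a [b [ab _ _ ab_off_f]]] := twins_of_not_extremal not_ext.
  case: ab; apply: th_id; apply/forallP => k; apply/implyP => ext_k.
  by rewrite ab_off_f //; apply: contraTneq ext_k => ->.
have [f] := H_inhabited nt; have [m _ m_max] := exists_Hmax f.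
by move: (thE _ _ m (th_all (bot A) (top A))); rewrite /extremal m_max pt_bot pt_top => /(_ isT).
Qed.

Definition clopen (A : ddpa) (e : A) := forall f g : H A, Hleb f g -> f e = g e.

Section ClopenElement.
Variables (A : ddpa) (e : A).
Hypothesis e_clopen : clopen e.

Lemma clopen_pt_st (f : H A) : f (st e) = ~~ f e.
Proof.
rewrite pt_st; apply/forallP/idP => [e_st|nfe g]; first exact: implyP (e_st f) (Hleb_refl f).
by apply/implyP => fg; rewrite -(e_clopen fg).
Qed.

Lemma clopen_st : clopen (st e).
Proof. by move=> f g fg; rewrite !clopen_pt_st (e_clopen fg). Qed.

Lemma jn_clopen_st : jn e (st e) = top A.
Proof. by apply: pt_ext => f; rewrite pt_jn clopen_pt_st orbN pt_top. Qed.

Lemma pt_st_mt_clopen x (f : H A) : f e -> f (st (mt x e)) = f (st x).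
Proof.
move=> fe; rewrite !pt_st; apply: eq_forallb => g.
by case: (boolP (Hleb f g)) => //= fg; rewrite pt_mt -(e_clopen fg) fe andbT.
Qed.

Lemma pt_pl_mt_clopen x (f : H A) : f e -> f (pl (mt x e)) = f (pl x).
Proof.
move=> fe; rewrite !pt_pl; apply: eq_existsb => g.
by case: (boolP (Hleb g f)) => //= gf; rewrite pt_mt (e_clopen gf) fe andbT.
Qed.

Local Notation down := {x : A | mt x e == x}.
Local Notation in_down := (fun z : A => mt z e == z).

Lemma mt_jn_le (x y : down) : mt (jn (val x) (val y)) e == jn (val x) (val y).
Proof. by rewrite mtC distr !(mtC e) (eqP (valP x)) (eqP (valP y)). Qed.

Lemma mt_mt_le (x y : down) : mt (mt (val x) (val y)) e == mt (val x) (val y).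
Proof. by rewrite -mtA (eqP (valP y)). Qed.

Lemma mt_le (x : A) : mt (mt x e) e == mt x e.
Proof. by rewrite -mtA mtxx. Qed.

Definition down_jn x y : down := exist in_down _ (mt_jn_le x y).
Definition down_mt x y : down := exist in_down _ (mt_mt_le x y).
Definition proj x : down := exist in_down _ (mt_le x).
Definition down_st (x : down) := proj (st (val x)).
Definition down_pl (x : down) := proj (pl (val x)).
Definition down_bot : down := exist in_down _ (introT eqP (mt0x e)).
Definition down_top : down := exist in_down _ (introT eqP (mtxx e)).

Lemma down_eq (x y : down) : x = y <-> val x = val y.
Proof. by split => [->|/val_inj]. Qed.

Lemma down_jnC x y : down_jn x y = down_jn y x.
Proof. exact/val_inj/jnC. Qed.
Lemma down_jnA x y z : down_jn x (down_jn y z) = down_jn (down_jn x y) z.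
Proof. exact/val_inj/jnA. Qed.
Lemma down_mtC x y : down_mt x y = down_mt y x.
Proof. exact/val_inj/mtC. Qed.
Lemma down_mtA x y z : down_mt x (down_mt y z) = down_mt (down_mt x y) z.
Proof. exact/val_inj/mtA. Qed.
Lemma down_absJM x y : down_jn x (down_mt x y) = x.
Proof. exact/val_inj/absJM. Qed.
Lemma down_absMJ x y : down_mt x (down_jn x y) = x.
Proof. exact/val_inj/absMJ. Qed.
Lemma down_distr x y z : down_mt x (down_jn y z) = down_jn (down_mt x y) (down_mt x z).
Proof. exact/val_inj/distr. Qed.
Lemma down_botJ x : down_jn down_bot x = x.
Proof. exact/val_inj/botJ. Qed.
Lemma down_topM x : down_mt down_top x = x.
Proof. by apply/val_inj; rewrite /= mtC; exact: (eqP (valP x)). Qed.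

Lemma down_stP x y : down_mt x y = down_bot <-> down_mt y (down_st x) = y.
Proof.
by rewrite !down_eq /= (mtC (st _)) mtA (eqP (valP y)); apply: stP.
Qed.

Lemma down_plP x y : down_jn x y = down_top <-> down_mt (down_pl x) y = down_pl x.
Proof.
have x_le (f : H A) : f (val x) -> f e by rewrite -(eqP (valP x)) pt_mt => /andP [].
have y_le (f : H A) : f (val y) -> f e by rewrite -(eqP (valP y)) pt_mt => /andP [].
rewrite !down_eq /=; split => xy; apply: pt_ext => f.
  rewrite !pt_mt; case: (boolP (f (pl (val x)))) => //= fp; case: (boolP (f e)) => //= fe.
  move: fp; rewrite pt_pl => /existsP [g /andP [gf ngx]]; apply: (pt_Hleb gf).
  by move: (pt_jn g (val x) (val y)); rewrite xy (negbTE ngx) (e_clopen gf) fe.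
rewrite pt_jn; case: (boolP (f e)) => fe; last first.
  by rewrite (contraNF (x_le f) fe) (contraNF (y_le f) fe).
case: (boolP (f (val x))) => //= nfx.
have fp : f (pl (val x)) by rewrite pt_pl; apply/existsP; exists f; rewrite Hleb_refl.
by move: (congr1 f xy); rewrite !pt_mt fp fe /= => ->.
Qed.

Definition downA : ddpa :=
  @DDPA down down_jn down_mt down_st down_pl down_bot down_top
    down_jnC down_jnA down_mtC down_mtA down_absJM down_absMJ down_distr
    down_botJ down_topM down_stP down_plP.

Lemma proj_jn x y : proj (jn x y) = jn (proj x : downA) (proj y).
Proof. by apply: val_inj; rewrite /= mtC distr !(mtC e). Qed.

Lemma proj_mt x y : proj (mt x y) = mt (proj x : downA) (proj y).
Proof. by apply/val_inj/pt_ext => f; rewrite /= !pt_mt andbACA andbb. Qed.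

Lemma proj_st x : proj (st x) = st (proj x : downA).
Proof.
apply/val_inj/pt_ext => f; rewrite /= !pt_mt.
by case: (boolP (f e)) => fe; rewrite ?andbF // pt_st_mt_clopen.
Qed.

Lemma proj_pl x : proj (pl x) = pl (proj x : downA).
Proof.
apply/val_inj/pt_ext => f; rewrite /= !pt_mt.
by case: (boolP (f e)) => fe; rewrite ?andbF // pt_pl_mt_clopen.
Qed.

Lemma proj_bot : proj (bot A) = bot downA.
Proof. exact/val_inj/mt0x. Qed.

Lemma proj_top : proj (top A) = top downA.
Proof. exact/val_inj/topM. Qed.

End ClopenElement.

(* A clopen [e] splits [A] as the product of the intervals [[0, e]] and [[0, e^*]]. *)
Lemma clopen_not_dir_indec (A : ddpa) (e : A) (f g : H A) :
  clopen e -> f e -> ~~ g e -> ~ dir_indec A.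
Proof.
move=> ce fe ge [_ []]; have ce' := clopen_st ce.
exists (downA ce), (downA ce'), (fun x => (proj e x, proj (st e) x)); split.
- exists (fun p => jn (val p.1) (val p.2)) => [x|[b c]] /=.
    by rewrite -distr jn_clopen_st ?mtx1.
  have b_le := eqP (valP b); have c_le := eqP (valP c).
  congr pair; apply: val_inj => /=; first by apply: mt_jn_disj => //; apply: mt_le_st.
  by rewrite jnC; apply: mt_jn_disj => //; apply: mt_st_le.
- split=> [x y|x y|x|x|]; try split; congr pair;
    by [apply: proj_jn | apply: proj_mt | apply: proj_st | apply: proj_pl
       | apply: proj_bot | apply: proj_top].
- by exists (bot (downA ce)), (top (downA ce)) => /(congr1 (pt f \o val)) /=; rewrite pt_bot fe.
- exists (bot (downA ce')), (top (downA ce')) => /(congr1 (pt g \o val)) /=.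
  by rewrite pt_bot clopen_pt_st ?ge.
Qed.

Lemma dir_indec_connected (A : ddpa) : dir_indec A -> Hconnected A.
Proof.
move=> A_indec; have [A_nt _] := A_indec; split; first exact: H_inhabited.
move=> f g; apply: contrapT => not_fg.
pose R := clos_refl_trans (H A) (fun u v => Hle u v \/ Hle v u).
have R_Hleb u v : Hleb u v -> `[< R f u >] = `[< R f v >].
  move=> /HleP uv; apply/asboolP/asboolP => fu.
    by apply: rt_trans fu (rt_step _ _ _ _ (or_introl uv)).
  by apply: rt_trans fu (rt_step _ _ _ _ (or_intror uv)).
have [e e_pts] : exists e : A, forall k : H A, k e = `[< R f k >].
  by apply: exists_elt_of_upset => u v /R_Hleb ->.
have e_clopen : clopen e by move=> u v uv; rewrite !e_pts (R_Hleb _ _ uv).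
apply: (clopen_not_dir_indec e_clopen (f := f) (g := g)) A_indec.
  by rewrite e_pts; apply/asboolP/rt_refl.
by rewrite e_pts; apply/asboolP.
Qed.

Section ExtensiveIteration.
Variables (T : finType) (F : {set T} -> {set T}).
Hypothesis F_ext : forall X : {set T}, X \subset F X.

Lemma sub_iter_extensive (S : {set T}) k : S \subset iter k F S.
Proof. by elim: k => //= k /subset_trans; apply. Qed.

Lemma iter_extensive_card S k : F (iter k F S) = iter k F S \/ k < #|F (iter k F S)|.
Proof.
have grow (X : {set T}) : F X != X -> #|X| < #|F X|.
  by move=> FX; apply: proper_card; rewrite properEneq eq_sym FX F_ext.
elim: k => [|k [fix_k|lt_k]] /=.
- by case: (eqVneq (F S) S) => [|/grow/(leq_ltn_trans (leq0n _))]; [left|right].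
- by left; rewrite !fix_k.
- case: (eqVneq (F (F (iter k F S))) (F (iter k F S))) => [|/grow grown]; first by left.
  by right; apply: leq_ltn_trans lt_k grown.
Qed.

Lemma iter_extensive_fixed S n : #|T| <= n -> F (iter n F S) = iter n F S.
Proof.
move=> le_n; have [fix_T|] := iter_extensive_card S #|T|; last by rewrite ltnNge max_card.
by rewrite -(subnK le_n) iterD iter_fix.
Qed.

End ExtensiveIteration.

Definition i0 : 'I_3 := @Ordinal 3 0 isT.
Definition i1 : 'I_3 := @Ordinal 3 1 isT.
Definition i2 : 'I_3 := @Ordinal 3 2 isT.

Definition t_dd (t : term 3) : term 3 := TSt (TPl t).

Definition eq_term : term 3 :=
  let x := TVar i0 in let y := TVar i1 in
  TMt (TMt (TSt (TMt (TSt x) (TSt (TSt y)))) (TSt (TMt (TSt y) (TSt (TSt x)))))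
      (TMt (TJn (TPl y) (TPl (TPl x))) (TJn (TPl x) (TPl (TPl y)))).

Definition discr_term (N : nat) : term 3 :=
  let c := iter N t_dd eq_term in TJn (TMt (TVar i2) c) (TMt (TVar i0) (TSt c)).

Section Discriminator.
Variable A : ddpa.
Implicit Types (x y z : A) (f g : H A).

Definition dd x := st (pl x).

Lemma eval_iter_t_dd (env : 'I_3 -> A) N t : eval env (iter N t_dd t) = iter N dd (eval env t).
Proof. by elim: N => //= N ->. Qed.

Lemma st_bot : st (bot A) = top A.
Proof. by apply: pt_ext => f; rewrite pt_top pt_st; apply/forallP => g; rewrite pt_bot implybT. Qed.

Lemma st_top : st (top A) = bot A.
Proof. by rewrite -(topM (st (top A))) mt_st. Qed.

Lemma pl_top : pl (top A) = bot A.
Proof.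
apply: pt_ext => f; rewrite pt_bot pt_pl; apply/negbTE/existsPn => g.
by rewrite pt_top andbF.
Qed.

Lemma iter_dd_top N : iter N dd (top A) = top A.
Proof. by elim: N => //= N ->; rewrite /dd pl_top st_bot. Qed.

Lemma eval_eq_term_refl (env : 'I_3 -> A) : env i0 = env i1 -> eval env eq_term = top A.
Proof. by move=> /= ->; rewrite !mt_st st_bot !jn_pl !mtxx. Qed.

(* At a maximal point [st] acts as negation, so the first conjunct of [eq_term] is the
   biconditional of its arguments; at a minimal point [pl] does, for the second conjunct. *)
Lemma pt_eval_eq_term (env : 'I_3 -> A) f :
  extremal f -> f (env i0) != f (env i1) -> f (eval env eq_term) = false.
Proof.
rewrite /= !pt_mt => /orP [f_max|f_min].
  by rewrite !(pt_st_max _ f_max, pt_mt); case: (f (env i0)); case: (f (env i1)).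
by rewrite !pt_jn !(pt_pl_min _ f_min); case: (f (env i0)); case: (f (env i1)); rewrite ?andbF.
Qed.

Definition down_up (S : {set H A}) : {set H A} :=
  [set f | [exists g : H A, Hleb f g && [exists h : H A, Hleb h g && (h \in S)]]].

Lemma sub_down_up (S : {set H A}) : S \subset down_up S.
Proof.
apply/subsetP => f fS; rewrite inE; apply/existsP; exists f; rewrite Hleb_refl.
by apply/existsP; exists f; rewrite Hleb_refl.
Qed.

Lemma zeros_dd x : [set f : H A | ~~ f (dd x)] = down_up [set f : H A | ~~ f x].
Proof.
apply/setP => f; rewrite !inE pt_st negb_forall; apply: eq_existsb => g.
by rewrite negb_imply negbK pt_pl; congr (_ && _); apply: eq_existsb => h; rewrite inE.
Qed.

Lemma zeros_iter_dd N x :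
  [set f : H A | ~~ f (iter N dd x)] = iter N down_up [set f : H A | ~~ f x].
Proof. by elim: N => //= N <-; apply: zeros_dd. Qed.

(* A fixed point of [down_up] is closed under comparability, hence a union of components. *)
Lemma down_up_fixed_total (S : {set H A}) f : Hconnected A -> down_up S = S -> f \in S -> S = setT.
Proof.
move=> [_ conn] fixS fS; apply/setP => g; rewrite inE.
elim: (conn f g) fS => [u v uv|//|u v w _ IHuv _ IHvw] uS; last exact/IHvw/IHuv.
rewrite -fixS inE; case: uv => [/HleP uv|/HleP vu].
  by apply/existsP; exists v; rewrite Hleb_refl; apply/existsP; exists u; rewrite uv.
by apply/existsP; exists u; rewrite vu; apply/existsP; exists u; rewrite Hleb_refl.
Qed.

Lemma iter_dd_bot N x : Hconnected A -> #|{: H A}| <= N ->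
  (exists f : H A, ~~ f x) -> iter N dd x = bot A.
Proof.
move=> conn le_N [f nfx]; apply: pt_ext => g; rewrite pt_bot.
have zeros_fixed := iter_extensive_fixed sub_down_up [set f : H A | ~~ f x] le_N.
have f_zero : f \in iter N down_up [set f : H A | ~~ f x].
  by apply: subsetP (sub_iter_extensive sub_down_up _ N) _ _; rewrite inE.
move: (in_setT g); rewrite -(down_up_fixed_total conn zeros_fixed f_zero).
by rewrite -zeros_iter_dd inE => /negbTE.
Qed.

Lemma discr_term_induces N : Hconnected A -> (forall f : H A, extremal f) ->
  #|{: H A}| <= N -> induces_discr A (discr_term N).
Proof.
move=> conn ext le_N x y z; rewrite /= eval_iter_t_dd /discr.
case: eqP => [<-|nxy]; first by rewrite eval_eq_term_refl // iter_dd_top st_top mtx1 mtx0 jnx0.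
rewrite iter_dd_bot //; first by rewrite mtx0 st_bot mtx1 botJ.
by have [f nf] := exists_pt_neq nxy; exists f; rewrite pt_eval_eq_term.
Qed.

End Discriminator.

Theorem theorem4p1 (I : finType) (B : I -> ddpa)
    (Hnt : forall i, bot (B i) <> top (B i)) :
  let P1 := (forall i, quasi_primal (B i)) /\
            (exists t : term 3, forall i, induces_discr (B i) t) in
  let P2 := forall i, simple (B i) in
  let P3 := forall i, dir_indec (B i) /\ regular (B i) in
  let P4 := forall i, Hconnected (B i) /\
            (forall f : H (B i), Hmaximal f \/ Hminimal f) in
  (P1 <-> P2) /\ (P2 <-> P3) /\ (P3 <-> P4).
Proof.
move=> P1 P2 P3 P4.
have P1_P2 : P1 -> P2 by case=> qp _ i; apply: quasi_primal_simple (qp i) (Hnt i).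
have P2_P3 : P2 -> P3.
  move=> simp i; split; first exact: simple_dir_indec.
  by apply/regular_extremal; apply: simple_extremal.
have P3_P4 : P3 -> P4.
  move=> h i; have [indec /regular_extremal ext] := h i.
  by split=> [|f]; [apply: dir_indec_connected | apply/extremalP].
have P4_P1 : P4 -> P1.
  move=> h; pose N := \max_i #|{: H (B i)}|.
  have discr i : induces_discr (B i) (discr_term N).
    have [conn ext] := h i.
    by apply: discr_term_induces (leq_bigmax i) => // f; apply/extremalP.
  by split; [move=> i; exists (discr_term N) | exists (discr_term N)].
by split; [|split]; split; auto.
Qed.
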